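(* Let $M$ be a mutually algebraic structure with universe an infinite cardinal $\lambda$ such that $Th(M)$ is not purely monadic. Then for some $k\ge2$ there is a subset $Y\subseteq\lambda^k$ definable in $M$ with parameters that is mutually algebraic and such that $Y\setminus\Delta_k$ is infinite, where $\Delta_k=\{(a,\dots,a):a\in\lambda\}$.
   Context: $Y\subseteq\lambda^k$ is mutually algebraic if there is an integer $m$ such that for every $a\in\lambda$ at most $m$ tuples of $Y$ have $a$ as a coordinate. $Y^*\subseteq\lambda^{k+\ell}$ is padded mutually algebraic if for some permutation $\sigma$ of the $k+\ell$ coordinates, $Y^*=\sigma(Y\times\lambda^\ell)$ for some mutually algebraic $Y\subseteq\lambda^k$. A structure $M$ with universe $\lambda$ is mutually algebraic if every set definable with parameters in $M$ is a boolean combination of parameter-definable padded mutually algebraic sets. A complete theory $T$ is purely monadic if for every model with universe $\lambda$, every parameter-definable $Y\subseteq\lambda^k$ is definable in some structure $(\lambda,U_1,\dots,U_n)$ with $U_i$ unary. *)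

From Stdlib Require Import List.
From mathcomp Require Import all_boot all_fingroup.

Set Implicit Arguments.
Unset Strict Implicit.
Unset Printing Implicit Defensive.

Record signature := Signature {
  func : Type; func_ar : func -> nat;
  rel  : Type; rel_ar  : rel -> nat }.

(* Terms and formulas, variables as de Bruijn indices (nat). *)
Inductive term (L : signature) : Type :=
  | tvar : nat -> term L
  | tapp (f : func L) : ('I_(func_ar f) -> term L) -> term L.

Inductive formula (L : signature) : Type :=
  | ftrue | ffalse
  | feq  : term L -> term L -> formula L
  | frel (r : rel L) : ('I_(rel_ar r) -> term L) -> formula L
  | fneg : formula L -> formula L
  | fand : formula L -> formula L -> formula L
  | f_or : formula L -> formula L -> formula L
  | fimp : formula L -> formula L -> formula L
  | fall : formula L -> formula L      (* binds variable 0 *)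
  | fex  : formula L -> formula L.     (* binds variable 0 *)

Fixpoint tbound L (n : nat) (t : term L) : Prop :=
  match t with
  | tvar i => i < n
  | tapp f args => forall j, tbound n (args j)
  end.

Fixpoint fbound L (n : nat) (phi : formula L) : Prop :=
  match phi with
  | ftrue | ffalse => True
  | feq t u => tbound n t /\ tbound n u
  | frel r args => forall j, tbound n (args j)
  | fneg p => fbound n p
  | fand p q | f_or p q | fimp p q => fbound n p /\ fbound n q
  | fall p | fex p => fbound n.+1 p
  end.

Definition sentence L (phi : formula L) := fbound 0 phi.

Record structure (L : signature) := Structure {
  carrier :> Type;
  fint : forall f : func L, ('I_(func_ar f) -> carrier) -> carrier;
  rint : forall r : rel L, ('I_(rel_ar r) -> carrier) -> Prop }.

Definition scons (X : Type) (a : X) (e : nat -> X) : nat -> X :=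
  fun n => match n with 0 => a | S m => e m end.

Fixpoint eval L (M : structure L) (e : nat -> M) (t : term L) : M :=
  match t with
  | tvar i => e i
  | tapp f args => @fint L M f (fun j => @eval L M e (args j))
  end.

Fixpoint sat L (M : structure L) (e : nat -> M) (phi : formula L) : Prop :=
  match phi with
  | ftrue => True
  | ffalse => False
  | feq t u => @eval L M e t = @eval L M e u
  | frel r args => @rint L M r (fun j => @eval L M e (args j))
  | fneg p => ~ @sat L M e p
  | fand p q => @sat L M e p /\ @sat L M e q
  | f_or p q => @sat L M e p \/ @sat L M e q
  | fimp p q => @sat L M e p -> @sat L M e q
  | fall p => forall a : M, @sat L M (scons a e) p
  | fex p => exists a : M, @sat L M (scons a e) p
  end.

Arguments eval {L} M e t.
Arguments sat {L} M e phi.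

(* N is a model of Th(M): M and N satisfy the same sentences. *)
Definition elem_equiv L (M N : structure L) : Prop :=
  forall phi : formula L, sentence phi ->
    ((forall e : nat -> M, @sat L M e phi) <-> (forall e : nat -> N, sat N e phi)).

(* Valuation: variables 0..k-1 get the tuple x, variables >= k get parameters p. *)
Definition tenv (X : Type) (k : nat) (x : 'I_k -> X) (p : nat -> X) : nat -> X :=
  fun i => if (insub i : option 'I_k) is Some j then x j else p (i - k).

Definition definable L (M : structure L) (k : nat) (Y : ('I_k -> M) -> Prop) : Prop :=
  exists (phi : formula L) (p : nat -> M),
    forall x, Y x <-> sat M (tenv x p) phi.

Arguments definable {L} M {k} Y.

Definition definable0 L (M : structure L) (k : nat) (Y : ('I_k -> M) -> Prop) : Prop :=
  exists phi : formula L, fbound k phi /\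
    forall (x : 'I_k -> M) (p : nat -> M), Y x <-> sat M (tenv x p) phi.

Arguments definable0 {L} M {k} Y.

Definition finite_set (X : Type) (A : X -> Prop) : Prop :=
  exists s : list X, forall x, A x -> In x s.

Definition infinite_set (X : Type) (A : X -> Prop) : Prop := ~ finite_set A.

(* Y ⊆ X^k is mutually algebraic: there is m such that for every a, at most m
   tuples of Y have a as a coordinate (no m+1 distinct such tuples). *)
Definition mutually_algebraic (X : Type) (k : nat) (Y : ('I_k -> X) -> Prop) : Prop :=
  exists m : nat, forall (a : X) (f : 'I_m.+1 -> ('I_k -> X)),
    (forall i, Y (f i) /\ exists j, f i j = a) -> ~ injective f.

(* Z ⊆ X^n is padded mutually algebraic: n = k + l and Z = σ(Y × X^l) for a
   permutation σ of the coordinates and a mutually algebraic Y ⊆ X^k. *)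
Definition padded_mut_alg (X : Type) (n : nat) (Z : ('I_n -> X) -> Prop) : Prop :=
  exists (k l : nat) (E : k + l = n) (s : {perm 'I_n}) (Y : ('I_k -> X) -> Prop),
    mutually_algebraic Y /\
    forall x : 'I_n -> X, Z x <-> Y (fun i : 'I_k => x (s (cast_ord E (lshift l i)))).

Inductive bool_comb (X : Type) (P : (X -> Prop) -> Prop) : (X -> Prop) -> Prop :=
  | bc_base A : P A -> bool_comb P A
  | bc_top : bool_comb P (fun _ => True)
  | bc_compl A : bool_comb P A -> bool_comb P (fun x => ~ A x)
  | bc_inter A B : bool_comb P A -> bool_comb P B -> bool_comb P (fun x => A x /\ B x).

Definition mut_alg_structure L (M : structure L) : Prop :=
  forall (k : nat) (Z : ('I_k -> M) -> Prop), definable M Z ->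
    exists B, bool_comb (fun W => definable M W /\ padded_mut_alg W) B /\
              forall x, Z x <-> B x.

Definition monadic_sig (n : nat) : signature :=
  {| func := void; func_ar := fun _ => 0; rel := 'I_n; rel_ar := fun _ => 1 |}.

Definition unary_struct L (N : structure L) (n : nat) (U : 'I_n -> N -> Prop)
  : structure (monadic_sig n) :=
  @Structure (monadic_sig n) (carrier N)
    (fun (f : void) _ => match f return carrier N with end)
    (fun (r : 'I_n) (args : 'I_1 -> carrier N) => U r (args ord0)).

Definition purely_monadic L (M : structure L) : Prop :=
  forall N : structure L, inhabited N -> elem_equiv M N ->
    forall (k : nat) (Y : ('I_k -> N) -> Prop), definable N Y ->
      exists (n : nat) (U : 'I_n -> N -> Prop), definable0 (unary_struct U) Y.

Definition diagonal (X : Type) (k : nat) : ('I_k -> X) -> Prop :=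
  fun x => exists a : X, forall i, x i = a.

From Pilot Require Import Defs.
From Stdlib Require Import List Classical FunctionalExtensionality.
From mathcomp Require Import all_boot all_fingroup zify.

Set Implicit Arguments.
Unset Strict Implicit.
Unset Printing Implicit Defensive.

(* We prove the contrapositive.  Assume every such Y has only finitely many
   off-diagonal tuples.  Then Y is its diagonal part -- given by the unary
   definable set {a | (a, ..., a) in Y} -- plus finitely many points.  So every
   definable padded mutually algebraic set, and since M is mutually algebraic
   every definable set, is *unary-representable*: a boolean combination of
   coordinate equalities x_a = x_b and unary conditions "x_a in D" with D
   definable with parameters (the syntax [ucomb] below).  For a parameter-free
   phi, "phi is equivalent to the combination th for some parameters" is a
   single sentence, so it holds in every model N of Th(M).  In N the unary
   conditions become unary predicates, and the parameters of a definable set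
   are pinned down by singleton predicates; hence every definable set of N is
   definable in a unary expansion of N, i.e. Th(M) is purely monadic. *)

Section Syntax.
Variable L : signature.

(* Induction on terms with an induction hypothesis for every argument of an
   application (the generated principle has none, the arguments being a function). *)
Fixpoint term_ind' (P : term L -> Prop) (Hv : forall i, P (tvar L i))
  (Ha : forall f args, (forall j, P (args j)) -> P (@tapp L f args)) (t : term L) : P t :=
  match t with
  | tvar i => Hv i
  | tapp f args => Ha f args (fun j => term_ind' Hv Ha (args j))
  end.

Fixpoint trename (s : nat -> nat) (t : term L) : term L :=
  match t with
  | tvar i => tvar L (s i)
  | tapp f args => tapp (fun j => trename s (args j))
  end.

Definition up (s : nat -> nat) : nat -> nat :=
  fun i => if i is j.+1 then (s j).+1 else 0.

Fixpoint frename (s : nat -> nat) (phi : formula L) : formula L :=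
  match phi with
  | ftrue => ftrue L
  | ffalse => ffalse L
  | feq t u => feq (trename s t) (trename s u)
  | Defs.frel r args => Defs.frel (fun j => trename s (args j))
  | fneg p => fneg (frename s p)
  | fand p q => fand (frename s p) (frename s q)
  | f_or p q => f_or (frename s p) (frename s q)
  | fimp p q => fimp (frename s p) (frename s q)
  | fall p => fall (frename (up s) p)
  | fex p => fex (frename (up s) p)
  end.

Lemma eval_rename (M : structure L) s e (t : term L) :
  eval M e (trename s t) = eval M (fun i => e (s i)) t.
Proof.
elim/term_ind': t => [i|f args IH] //=.
by congr fint; apply: functional_extensionality => j; apply: IH.
Qed.

Lemma scons_up (X : Type) (a : X) (e : nat -> X) s :
  (fun i => scons a e (up s i)) = scons a (fun i => e (s i)).
Proof. by apply: functional_extensionality => -[|i]. Qed.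

Lemma sat_rename (M : structure L) (phi : formula L) : forall s e,
  sat M e (frename s phi) <-> sat M (fun i => e (s i)) phi.
Proof.
elim: phi => [||t u|r args|p IH|p IHp q IHq|p IHp q IHq|p IHp q IHq|p IH|p IH] s e //=.
- by rewrite !eval_rename.
- suff -> : (fun j => eval M e (trename s (args j))) =
            (fun j => eval M (fun i => e (s i)) (args j)) by [].
  by apply: functional_extensionality => j; rewrite eval_rename.
- by rewrite IH.
- by rewrite IHp IHq.
- by rewrite IHp IHq.
- by rewrite IHp IHq.
- by split => H a; move: (H a); rewrite IH scons_up.
- by split => -[a H]; exists a; move: H; rewrite IH scons_up.
Qed.

Fixpoint tfree_bound (t : term L) : nat :=
  match t with
  | tvar i => i.+1
  | tapp f args => \max_(j < func_ar f) tfree_bound (args j)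
  end.

Fixpoint free_bound (phi : formula L) : nat :=
  match phi with
  | ftrue | ffalse => 0
  | feq t u => maxn (tfree_bound t) (tfree_bound u)
  | Defs.frel r args => \max_(j < rel_ar r) tfree_bound (args j)
  | fneg p => free_bound p
  | fand p q | f_or p q | fimp p q => maxn (free_bound p) (free_bound q)
  | fall p | fex p => (free_bound p).-1
  end.

Lemma tbound_mono n n' (t : term L) : n <= n' -> tbound n t -> tbound n' t.
Proof.
move=> le; elim/term_ind': t => [i|f args IH] /=; first by move=> h; apply: leq_trans le.
by move=> H j; exact: IH.
Qed.

Lemma fbound_mono (phi : formula L) n n' : n <= n' -> fbound n phi -> fbound n' phi.
Proof.
elim: phi n n' => //= [t u|r args|p IHp q IHq|p IHp q IHq|p IHp q IHq|p IH|p IH] n n' le.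
- by case; split; apply: tbound_mono le _.
- by move=> H j; apply: tbound_mono le _.
- by case; split; [apply: IHp le _|apply: IHq le _].
- by case; split; [apply: IHp le _|apply: IHq le _].
- by case; split; [apply: IHp le _|apply: IHq le _].
- by apply: IH.
- by apply: IH.
Qed.

Lemma tbound_free_bound (t : term L) : tbound (tfree_bound t) t.
Proof.
elim/term_ind': t => [i|f args IH] //= j; apply: tbound_mono (IH j).
exact: (@leq_bigmax_cond _ (fun _ => true) (fun j => tfree_bound (args j)) j).
Qed.

Lemma fbound_free_bound (phi : formula L) : fbound (free_bound phi) phi.
Proof.
elim: phi => //= [t u|r args|p IHp q IHq|p IHp q IHq|p IHp q IHq|p IH|p IH].
- by split; apply: tbound_mono (tbound_free_bound _); rewrite ?leq_maxl ?leq_maxr.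
- move=> j; apply: tbound_mono (tbound_free_bound _).
  exact: (@leq_bigmax_cond _ (fun _ => true) (fun j => tfree_bound (args j)) j).
- by split; [apply: fbound_mono IHp; exact: leq_maxl|apply: fbound_mono IHq; exact: leq_maxr].
- by split; [apply: fbound_mono IHp; exact: leq_maxl|apply: fbound_mono IHq; exact: leq_maxr].
- by split; [apply: fbound_mono IHp; exact: leq_maxl|apply: fbound_mono IHq; exact: leq_maxr].
- by apply: fbound_mono IH; case: (free_bound p).
- by apply: fbound_mono IH; case: (free_bound p).
Qed.

Lemma eval_ext (M : structure L) n e e' (t : term L) : tbound n t ->
  (forall i, i < n -> e i = e' i) -> eval M e t = eval M e' t.
Proof.
move=> + H; elim/term_ind': t => [i|f args IH] /=; first exact: H.
by move=> Hb; congr fint; apply: functional_extensionality => j; apply: IH.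
Qed.

Lemma sat_ext (M : structure L) (phi : formula L) n e e' : fbound n phi ->
  (forall i, i < n -> e i = e' i) -> (sat M e phi <-> sat M e' phi).
Proof.
elim: phi n e e' => [||t u|r args|p IH|p IHp q IHq|p IHp q IHq|p IHp q IHq|p IH|p IH]
  n e e' //=.
- by move=> [h1 h2] H; rewrite (eval_ext h1 H) (eval_ext h2 H).
- move=> Hb H.
  suff -> : (fun j => eval M e (args j)) = (fun j => eval M e' (args j)) by [].
  by apply: functional_extensionality => j; apply: eval_ext H.
- by move=> Hb H; rewrite (IH _ _ _ Hb H).
- by move=> [??] H; rewrite (IHp _ _ _ _ H) // (IHq _ _ _ _ H).
- by move=> [??] H; rewrite (IHp _ _ _ _ H) // (IHq _ _ _ _ H).
- by move=> [??] H; rewrite (IHp _ _ _ _ H) // (IHq _ _ _ _ H).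
- move=> Hb H; have H' a i : i < n.+1 -> scons a e i = scons a e' i.
    by case: i => //= i; exact: H.
  by split=> H1 a; apply/(IH _ _ _ Hb (H' a)).
- move=> Hb H; have H' a i : i < n.+1 -> scons a e i = scons a e' i.
    by case: i => //= i; exact: H.
  by split=> -[a H1]; exists a; apply/(IH _ _ _ Hb (H' a)).
Qed.

Lemma tbound_rename n n' s (t : term L) : tbound n t ->
  (forall i, i < n -> s i < n') -> tbound n' (trename s t).
Proof.
move=> + H; elim/term_ind': t => [i|f args IH] /=; first exact: H.
by move=> Hb j; apply: IH.
Qed.

Lemma fbound_rename (phi : formula L) n n' s : fbound n phi ->
  (forall i, i < n -> s i < n') -> fbound n' (frename s phi).
Proof.
elim: phi n n' s => [||t u|r args|p IH|p IHp q IHq|p IHp q IHq|p IHp q IHq|p IH|p IH]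
  n n' s //=.
- by move=> [??] H; split; apply: tbound_rename H.
- by move=> Hb H j; apply: tbound_rename H.
- by move=> Hb H; apply: IH H.
- by move=> [??] H; split; [apply: IHp H|apply: IHq H].
- by move=> [??] H; split; [apply: IHp H|apply: IHq H].
- by move=> [??] H; split; [apply: IHp H|apply: IHq H].
- by move=> Hb H; apply: IH Hb _ => -[|i] //= hi; apply: H.
- by move=> Hb H; apply: IH Hb _ => -[|i] //= hi; apply: H.
Qed.

(* The valuation v_0, ..., v_(n-1), e_0, e_1, ...: the n innermost bound
   variables of n nested quantifiers are the first n variables. *)
Definition appv (X : Type) (n : nat) (v e : nat -> X) : nat -> X :=
  fun i => if i < n then v i else e (i - n).

Lemma appv_scons (X : Type) n (v : nat -> X) a e :
  appv n v (scons a e) = appv n.+1 (fun i => if i < n then v i else a) e.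
Proof.
apply: functional_extensionality => i; rewrite /appv.
case: (ltngtP i n) => hi.
- by rewrite ltnS (ltnW hi).
- by rewrite ltnNge hi /= -(subnSK hi).
- by rewrite hi ltnSn subnn.
Qed.

Lemma appv_last (X : Type) n (v : nat -> X) e :
  appv n.+1 (fun i => if i < n then v i else v n) e = appv n.+1 v e.
Proof.
apply: functional_extensionality => i; rewrite /appv.
case: ltnP => // hi; case: ltnP => // hi2.
by have -> : i = n by apply/eqP; rewrite eqn_leq hi2 -ltnS hi.
Qed.

Lemma appv0 (X : Type) (v e : nat -> X) : appv 0 v e = e.
Proof. by apply: functional_extensionality => i; rewrite /appv subn0. Qed.

Lemma sat_iter_fall (M : structure L) n (phi : formula L) e :
  sat M e (iter n (@fall L) phi) <-> forall v, sat M (appv n v e) phi.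
Proof.
elim: n e => [|n IH] e /=.
  by split => [H v|H]; [rewrite appv0|move: (H e); rewrite appv0].
split=> H.
- by move=> v; have := proj1 (IH _) (H (v n)) v; rewrite appv_scons appv_last.
- by move=> a; apply/IH => v; rewrite appv_scons; apply: H.
Qed.

Lemma sat_iter_fex (M : structure L) n (phi : formula L) e :
  sat M e (iter n (@fex L) phi) <-> exists v, sat M (appv n v e) phi.
Proof.
elim: n e => [|n IH] e /=.
  by split => [H|[v H]]; [exists e; rewrite appv0|move: H; rewrite appv0].
split.
- move=> [a /IH [v H]]; exists (fun i => if i < n then v i else a).
  by rewrite -appv_scons.
- move=> [v H]; exists (v n); apply/IH; exists v.
  by rewrite appv_scons appv_last.
Qed.

Lemma fbound_iter_fall n (phi : formula L) b :
  fbound (n + b) phi -> fbound b (iter n (@fall L) phi).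
Proof. by elim: n b => [|n IH] b //= H; apply: IH; rewrite addnS. Qed.

Lemma fbound_iter_fex n (phi : formula L) b :
  fbound (n + b) phi -> fbound b (iter n (@fex L) phi).
Proof. by elim: n b => [|n IH] b //= H; apply: IH; rewrite addnS. Qed.

End Syntax.

Lemma tenv_lt (X : Type) k (x : 'I_k -> X) p (i : 'I_k) : tenv x p i = x i.
Proof. by rewrite /tenv valK. Qed.

Lemma tenv_ge (X : Type) k (x : 'I_k -> X) p i : k <= i -> tenv x p i = p (i - k).
Proof. by move=> h; rewrite /tenv insubF // ltnNge h. Qed.

Definition shift (X : Type) (r : nat -> X) (o : nat) : nat -> X := fun i => r (o + i).

Lemma and_iff_compat (A A' B B' : Prop) :
  (A <-> A') -> (B <-> B') -> (A /\ B <-> A' /\ B').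
Proof. tauto. Qed.

Section UnaryCombinations.
Variables (L : signature) (m : nat).

(* Unary combinations on m coordinates: boolean combinations of coordinate
   equalities x_a = x_b and unary conditions "x_a satisfies d", where d is an
   L-formula whose free variables other than 0 are parameters. *)
Inductive ucomb :=
  | UTrue
  | UNeg of ucomb
  | UAnd of ucomb & ucomb
  | UEq of 'I_m & 'I_m
  | UIn of 'I_m & formula L.

(* Number of parameter slots of a combination.  A unary condition UIn a d
   reserves one slot (later the index of its unary predicate) followed by the
   parameters of d. *)
Fixpoint nparams (q : ucomb) : nat :=
  match q with
  | UTrue | UEq _ _ => 0
  | UNeg q => nparams q
  | UAnd a b => nparams a + nparams b
  | UIn _ d => (free_bound d).+1
  end.

Fixpoint usat (X : structure L) (z : 'I_m -> X) (q : ucomb) (r : nat -> X) : Prop :=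
  match q with
  | UTrue => True
  | UNeg q => ~ usat z q r
  | UAnd a b => usat z a r /\ usat z b (shift r (nparams a))
  | UEq a b => z a = z b
  | UIn a d => sat X (scons (z a) r) d
  end.

Lemma usat_ext (X : structure L) z q r r' :
  (forall i, i < nparams q -> r i = r' i) -> (usat (X := X) z q r <-> usat z q r').
Proof.
elim: q r r' => [|q IH|a IHa b IHb|a b|a d] r r' H //=.
- by rewrite (IH _ _ H).
- rewrite (IHa r r'); last by move=> i hi; apply: H; apply: leq_trans hi (leq_addr _ _).
  by rewrite (IHb (shift r (nparams a)) (shift r' (nparams a))) // => i hi;
    apply: H; rewrite ltn_add2l.
- apply: (sat_ext (n := free_bound d)); first exact: fbound_free_bound.
  by case=> //= i hi; apply: H; rewrite ltnS ltnW // ltnW.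
Qed.

Fixpoint ucomb_formula (q : ucomb) (off : nat) : formula L :=
  match q with
  | UTrue => ftrue L
  | UNeg q => fneg (ucomb_formula q off)
  | UAnd a b => fand (ucomb_formula a off) (ucomb_formula b (off + nparams a))
  | UEq a b => feq (tvar L a) (tvar L b)
  | UIn a d => frename (fun i => if i is j.+1 then m + off + j else nat_of_ord a) d
  end.

Lemma sat_ucomb_formula (X : structure L) q off (E : nat -> X) :
  sat X E (ucomb_formula q off) <->
  usat (fun a : 'I_m => E a) q (fun i => E (m + off + i)).
Proof.
elim: q off => [|q IH|a IHa b IHb|a b|a d] off //=.
- by rewrite IH.
- rewrite IHa IHb.
  suff -> : (fun i => E (m + (off + nparams a) + i)) =
            shift (fun i => E (m + off + i)) (nparams a) by [].
  by apply: functional_extensionality => i; rewrite /shift !addnA.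
- rewrite sat_rename.
  suff -> : (fun i => E (if i is j.+1 then m + off + j else nat_of_ord a)) =
            scons (E a) (fun i => E (m + off + i)) by [].
  by apply: functional_extensionality => -[|i].
Qed.

Lemma fbound_ucomb_formula q off : fbound (m + off + nparams q) (ucomb_formula q off).
Proof.
elim: q off => [|q IH|a IHa b IHb|a b|a d] off //=.
- split; first by apply: fbound_mono (IHa off); rewrite addnA leq_addr.
  by have := IHb (off + nparams a); rewrite !addnA.
- by rewrite addn0; split; apply: leq_trans (ltn_ord _) (leq_addr _ _).
- apply: fbound_rename (fbound_free_bound d) _ => -[|i] /= hi.
  + by apply: leq_trans (ltn_ord a) _; rewrite -addnA leq_addr.
  + by rewrite ltn_add2l ltnS ltnW // ltnW.
Qed.

Fixpoint upred (X : structure L) (q : ucomb) (r : nat -> X) : nat -> X -> Prop :=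
  match q with
  | UNeg q => upred q r
  | UAnd a b => fun i => if i < nparams a then upred a r i
                         else upred b (shift r (nparams a)) (i - nparams a)
  | UIn a d => fun i y => if i == 0 then sat X (scons y r) d else False
  | _ => fun _ _ => False
  end.

Variables (npred : nat) (tau : 'I_m -> nat).

(* Translation into the monadic signature with predicates U_0, ..., U_npred:
   coordinate a becomes variable tau a, and the condition of the slot
   m + off + i becomes the predicate U_(m + off + i). *)
Fixpoint ucomb_monadic (q : ucomb) (off : nat) : formula (monadic_sig npred.+1) :=
  match q with
  | UTrue => ftrue _
  | UNeg q => fneg (ucomb_monadic q off)
  | UAnd a b => fand (ucomb_monadic a off) (ucomb_monadic b (off + nparams a))
  | UEq a b => feq (tvar _ (tau a)) (tvar _ (tau b))
  | UIn a d => @Defs.frel (monadic_sig npred.+1) (inord (m + off) : 'I_npred.+1)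
                 (fun _ => tvar _ (tau a))
  end.

Lemma sat_ucomb_monadic (X : structure L) (U : nat -> X -> Prop) (z : 'I_m -> X) q
    off r env :
  m + off + nparams q <= npred ->
  (forall i y, i < nparams q -> (U (m + off + i) y <-> upred q r i y)) ->
  (forall a, env (tau a) = z a) ->
  (sat (unary_struct (fun i : 'I_npred.+1 => U i)) env (ucomb_monadic q off) <->
   usat z q r).
Proof.
elim: q off r env => [|q IH|a IHa b IHb|a b|a d] off r env Hb HU Hz //=.
- by rewrite (IH off r env Hb HU Hz).
- apply: and_iff_compat.
  + apply: IHa Hz.
    * by apply: leq_trans Hb; rewrite leq_add2l leq_addr.
    * move=> i y hi; rewrite HU /= ?hi //.
      by apply: leq_trans hi (leq_addr _ _).
  + apply: IHb Hz.
    * by move: Hb; rewrite /= !addnA.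
    * move=> i y hi.
      have -> : m + (off + nparams a) + i = m + off + (nparams a + i) by rewrite !addnA.
      rewrite HU /=; last by rewrite ltn_add2l.
      by rewrite ltnNge leq_addr /= addKn.
- by rewrite !Hz.
- rewrite inordK; last by rewrite ltnS; apply: leq_trans _ Hb; exact: leq_addr.
  by rewrite Hz -(addn0 (m + off)) HU.
Qed.

Lemma fbound_ucomb_monadic K q off :
  (forall a, tau a < K) -> fbound K (ucomb_monadic q off).
Proof. by move=> H; elim: q off => [|q IH|a IHa b IHb|a b|a d] off //=. Qed.

End UnaryCombinations.

Lemma In_mem (T : eqType) (x : T) s : x \in s -> In x s.
Proof.
elim: s => [|y s IH] //=; rewrite in_cons => /orP [/eqP ->|h]; [by left|right; exact: IH h].
Qed.

Lemma In_enum (I : finType) (i : I) : In i (enum I).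
Proof. by apply: In_mem; rewrite mem_enum. Qed.

Lemma tenv1 (X : Type) (a : X) p : tenv (fun _ : 'I_1 => a) p = scons a p.
Proof.
apply: functional_extensionality => -[|i]; first by rewrite (tenv_lt _ _ ord0).
by rewrite tenv_ge // subn1.
Qed.

Lemma diagonal_small (X : Type) (a : X) k (y : 'I_k -> X) : k < 2 -> diagonal y.
Proof.
case: k y => [|[|//]] y _; first by exists a => -[].
by exists (y ord0) => i; congr y; apply: val_inj; case: i => -[].
Qed.

Section Representable.
Variables (L : signature) (M : structure L) (c : M).

Definition unary_rep m (W : ('I_m -> M) -> Prop) : Prop :=
  exists (q : ucomb L m) (r : nat -> M), forall x, W x <-> usat x q r.

Lemma rep_ext m (W W' : ('I_m -> M) -> Prop) :
  (forall x, W x <-> W' x) -> unary_rep W -> unary_rep W'.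
Proof. by move=> H [q [r Hq]]; exists q, r => x; rewrite -H. Qed.

Lemma rep_top m : unary_rep (fun _ : 'I_m -> M => True).
Proof. by exists (UTrue L m), (fun _ => c). Qed.

Lemma rep_neg m (W : ('I_m -> M) -> Prop) : unary_rep W -> unary_rep (fun x => ~ W x).
Proof. by move=> [q [r Hq]]; exists (UNeg q), r => x /=; rewrite Hq. Qed.

Lemma rep_false m : unary_rep (fun _ : 'I_m -> M => False).
Proof. by apply: rep_ext (rep_neg (rep_top m)) => x; tauto. Qed.

Lemma rep_const m (P : Prop) : unary_rep (fun _ : 'I_m -> M => P).
Proof.
by case: (classic P) => hP; [apply: rep_ext (rep_top m)|apply: rep_ext (rep_false m)].
Qed.

Lemma rep_and m (W W' : ('I_m -> M) -> Prop) :
  unary_rep W -> unary_rep W' -> unary_rep (fun x => W x /\ W' x).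
Proof.
move=> [q1 [r1 H1]] [q2 [r2 H2]].
pose r i := if i < nparams q1 then r1 i else r2 (i - nparams q1).
exists (UAnd q1 q2), r => x /=.
have -> : shift r (nparams q1) = r2.
  by apply: functional_extensionality => i; rewrite /shift /r ltnNge leq_addr /= addKn.
by rewrite H1 H2 (@usat_ext _ _ _ _ _ r r1) // => i hi; rewrite /r hi.
Qed.

Lemma rep_or m (W W' : ('I_m -> M) -> Prop) :
  unary_rep W -> unary_rep W' -> unary_rep (fun x => W x \/ W' x).
Proof.
move=> h1 h2; apply: rep_ext (rep_neg (rep_and (rep_neg h1) (rep_neg h2))) => x; tauto.
Qed.

Lemma rep_all_list m (A : Type) (l : list A) (P : A -> ('I_m -> M) -> Prop) :
  (forall a, unary_rep (P a)) -> unary_rep (fun x => forall a, In a l -> P a x).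
Proof.
move=> H; elim: l => [|a l IH] /=; first by apply: rep_ext (rep_top m).
apply: rep_ext (rep_and (H a) IH) => x; split.
- by move=> [h1 h2] b [<-|hb] //; apply: h2.
- by move=> h; split; [apply: h; left|move=> b hb; apply: h; right].
Qed.

Lemma rep_ex_list m (A : Type) (l : list A) (P : A -> ('I_m -> M) -> Prop) :
  (forall a, unary_rep (P a)) -> unary_rep (fun x => exists a, In a l /\ P a x).
Proof.
move=> H; elim: l => [|a l IH] /=.
  by apply: rep_ext (rep_false m) => x; split => // -[a []].
apply: rep_ext (rep_or (H a) IH) => x; split.
- by move=> [h|[b [hb h]]]; [exists a; split; [left|]|exists b; split; [right|]].
- by move=> [b [[<-|hb] h]]; [left|right; exists b].
Qed.

Lemma rep_all_fin m (I : finType) (P : I -> ('I_m -> M) -> Prop) :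
  (forall a, unary_rep (P a)) -> unary_rep (fun x => forall a, P a x).
Proof.
move=> H; apply: rep_ext (rep_all_list (enum I) H) => x.
by split=> h a; [apply: h; apply: In_enum|move=> _; apply: h].
Qed.

Lemma rep_eq m (a b : 'I_m) : unary_rep (fun x => x a = x b).
Proof. by exists (UEq L a b), (fun _ => c). Qed.

Lemma rep_unary m (a : 'I_m) d r : unary_rep (fun x => sat M (scons (x a) r) d).
Proof. by exists (UIn a d), r. Qed.

Lemma rep_eq_const m (a : 'I_m) (t : M) : unary_rep (fun x => x a = t).
Proof. exact: rep_unary a (feq (tvar L 0) (tvar L 1)) (fun _ => t). Qed.

Lemma definable_ext k (W W' : ('I_k -> M) -> Prop) :
  (forall x, W x <-> W' x) -> definable M W -> definable M W'.
Proof. by move=> H [phi [p Hp]]; exists phi, p => x; rewrite -H. Qed.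

Lemma definable_subst m n (W : ('I_m -> M) -> Prop) (g : 'I_m -> option 'I_n) :
  definable M W ->
  definable M (fun y : 'I_n -> M => W (fun j => if g j is Some i then y i else c)).
Proof.
move=> [chi [q Hq]].
pose s j := if (insub j : option 'I_m) is Some j' then
              (if g j' is Some i then nat_of_ord i else n)
            else n.+1 + (j - m).
exists (frename s chi), (scons c q) => y; rewrite sat_rename Hq.
suff -> : (fun i => tenv y (scons c q) (s i)) =
  tenv (fun j => if g j is Some i then y i else c) q by [].
apply: functional_extensionality => j; rewrite /s.
case: (ltnP j m) => hj.
- rewrite (insubT (fun i => i < m) hj) (tenv_lt _ _ (Ordinal hj)) /=.
  case: (g _) => [i|]; first by rewrite tenv_lt.
  by rewrite tenv_ge // subnn.
- rewrite insubF; last by rewrite ltnNge hj.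
  rewrite tenv_ge; last by apply: leq_trans (leqnSn n) (leq_addr _ _).
  by rewrite tenv_ge // addSn subSn ?leq_addr // (addnC n) addnK.
Qed.

Lemma definable_diag_section k (Y : ('I_k -> M) -> Prop) : definable M Y ->
  exists (d : formula L) (r : nat -> M), forall a, Y (fun _ => a) <-> sat M (scons a r) d.
Proof.
move=> /(definable_subst (fun _ => Some (ord0 : 'I_1))) [d [r Hd]].
by exists d, r => a; rewrite -tenv1 -Hd.
Qed.

(* Let Y have a unary diagonal section and finitely many off-diagonal tuples.
   Then Y is its diagonal part plus finitely many points, so the pull-back of
   Y along any choice of coordinates pi : 'I_k -> 'I_m is unary-representable. *)
Lemma rep_finite_offdiag m k (pi : 'I_k -> 'I_m) (Y : ('I_k -> M) -> Prop) d r :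
  (forall a, Y (fun _ => a) <-> sat M (scons a r) d) ->
  finite_set (fun y => Y y /\ ~ diagonal y) ->
  unary_rep (fun x : 'I_m -> M => Y (fun i => x (pi i))).
Proof.
move=> Hd [sl Hsl]; case: (posnP k) => [k0|k_gt0].
  apply: rep_ext (rep_const m (Y (fun _ => c))) => x.
  by have -> : (fun i => x (pi i)) = (fun _ => c)
    by apply: functional_extensionality => i; have := ltn_ord i; lia.
pose i0 := Ordinal k_gt0.
have decomp y : Y y <-> (Y (fun _ => y i0) /\ forall i, y i = y i0) \/
    (exists t, In t sl /\ (Y t /\ ~ diagonal t) /\ forall i, y i = t i).
  have const_y : (forall i, y i = y i0) -> y = (fun _ => y i0).
    exact: functional_extensionality.
  split.
  - move=> hy; case: (classic (diagonal y)) => [[a ha]|hd].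
    + have y_const i : y i = y i0 by rewrite !ha.
      by left; rewrite -(const_y y_const).
    + by right; exists y; split; [apply: Hsl|].
  - move=> [[hy /const_y ->] //|[t [_ [[ht _] /functional_extensionality ->]]] //].
have diag_part : unary_rep (fun x : 'I_m -> M =>
    Y (fun _ => x (pi i0)) /\ forall i, x (pi i) = x (pi i0)).
  apply: rep_and; first by apply: rep_ext (rep_unary (pi i0) d r) => x; rewrite Hd.
  by apply: rep_all_fin => i; exact: rep_eq.
have point_part : unary_rep (fun x : 'I_m -> M =>
    exists t, In t sl /\ (Y t /\ ~ diagonal t) /\ forall i, x (pi i) = t i).
  apply: rep_ex_list => t; case: (classic (Y t /\ ~ diagonal t)) => ht.
  + by apply: rep_ext (rep_all_fin (fun i => rep_eq_const (pi i) (t i))) => x; tauto.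
  + by apply: rep_ext (rep_false m) => x; tauto.
by apply: rep_ext (rep_or diag_part point_part) => x; rewrite (decomp (fun i => x (pi i))).
Qed.

Section FiniteOffDiagonal.
(* The negation of the theorem: all definable mutually algebraic sets of arity
   at least 2 have only finitely many off-diagonal tuples. *)
Hypothesis offdiag_finite : forall k, 2 <= k -> forall Y : ('I_k -> M) -> Prop,
  definable M Y -> mutually_algebraic Y -> finite_set (fun x => Y x /\ ~ diagonal x).

(* A definable padded mutually algebraic set W = s(Y x M^l) is the pull-back of
   Y along the coordinates pi = s o lshift; Y is definable (substitute c for
   the padding coordinates), so rep_finite_offdiag applies. *)
Lemma rep_padded m (W : ('I_m -> M) -> Prop) :
  definable M W -> padded_mut_alg W -> unary_rep W.
Proof.
move=> Wdef [k [l [E [s [Y [Yma HW]]]]]].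
pose pi i := s (cast_ord E (lshift l i)).
pose coord j : option 'I_k :=
  if split (cast_ord (esym E) ((s^-1)%g j)) is inl i then Some i else None.
have coord_pi i : coord (pi i) = Some i.
  by rewrite /coord /pi permK cast_ordK (unsplitK (inl _ i)).
have Ydef : definable M Y.
  apply: definable_ext (definable_subst coord Wdef) => y; rewrite HW.
  by have -> // : (fun i => if coord (pi i) is Some i' then y i' else c) = y;
    apply: functional_extensionality => i; rewrite coord_pi.
have [d [r Hd]] := definable_diag_section Ydef.
have Yfin : finite_set (fun y => Y y /\ ~ diagonal y).
  case: (leqP 2 k) => [k2|k_lt2]; first exact: offdiag_finite.
  by exists nil => y [_ []]; exact: diagonal_small.
by apply: rep_ext (rep_finite_offdiag pi Hd Yfin) => x; rewrite HW.
Qed.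

Lemma rep_definable m (Z : ('I_m -> M) -> Prop) :
  mut_alg_structure M -> definable M Z -> unary_rep Z.
Proof.
move=> Mma /Mma [B [HB HZB]]; apply: rep_ext (fun x => iff_sym (HZB x)) _.
elim: HB => {B HZB} [A [Adef Apadded]| |A _ IH|A B _ IHA _ IHB].
- exact: rep_padded.
- exact: rep_top.
- exact: rep_neg.
- exact: rep_and.
Qed.

End FiniteOffDiagonal.
End Representable.

Section Transfer.
Variables (L : signature) (m : nat) (phi : formula L) (th : ucomb L m).
Hypothesis phi_m : fbound m phi.

Definition ucomb_sentence : formula L :=
  iter (nparams th) (@fex L) (iter m (@fall L)
    (fand (fimp phi (ucomb_formula th 0)) (fimp (ucomb_formula th 0) phi))).

Lemma ucomb_sentence_closed : sentence ucomb_sentence.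
Proof.
apply: fbound_iter_fex; rewrite addn0; apply: fbound_iter_fall.
have phi_bound : fbound (m + nparams th) phi by apply: fbound_mono phi_m; exact: leq_addr.
have := fbound_ucomb_formula th 0; rewrite addn0 => th_bound.
by do !split.
Qed.

Lemma sat_tenv_params (X : structure L) (x : 'I_m -> X) p p' :
  sat X (tenv x p) phi <-> sat X (tenv x p') phi.
Proof. by apply: sat_ext phi_m _ => i hi; rewrite !(tenv_lt _ _ (Ordinal hi)). Qed.

Lemma appv_tenv (X : Type) (v e E : nat -> X) :
  appv m v E = appv m (tenv (fun a : 'I_m => v a) e) E.
Proof.
apply: functional_extensionality => i; rewrite /appv.
by case: ifP => // hi; rewrite (tenv_lt _ _ (Ordinal hi)).
Qed.

Lemma sat_ucomb_sentence (X : structure L) e :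
  sat X e ucomb_sentence <-> exists w, forall x p, sat X (tenv x p) phi <-> usat x th w.
Proof.
have key w (x : 'I_m -> X) :
    sat X (appv m (tenv x e) (appv (nparams th) w e))
      (fand (fimp phi (ucomb_formula th 0)) (fimp (ucomb_formula th 0) phi)) <->
    (sat X (tenv x e) phi <-> usat x th w).
  have Hphi : sat X (appv m (tenv x e) (appv (nparams th) w e)) phi <-> sat X (tenv x e) phi.
    by apply: sat_ext phi_m _ => i hi; rewrite /appv hi.
  have Hth : sat X (appv m (tenv x e) (appv (nparams th) w e)) (ucomb_formula th 0) <->
             usat x th w.
    rewrite sat_ucomb_formula.
    have -> : (fun a : 'I_m => appv m (tenv x e) (appv (nparams th) w e) a) = x.
      by apply: functional_extensionality => a; rewrite /appv ltn_ord tenv_lt.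
    have -> : (fun i => appv m (tenv x e) (appv (nparams th) w e) (m + 0 + i)) =
              appv (nparams th) w e.
      by apply: functional_extensionality => i; rewrite /appv addn0 ltnNge leq_addr /= addKn.
    by apply: usat_ext => i hi; rewrite /appv hi.
  by rewrite /= Hphi Hth; tauto.
rewrite /ucomb_sentence sat_iter_fex; split=> -[w Hw]; exists w.
- move/sat_iter_fall: Hw => Hw x p.
  by rewrite (sat_tenv_params x p e); apply/key.
- by apply/sat_iter_fall => v; rewrite (appv_tenv v e); apply/key.
Qed.

(* The equivalence of phi with th (for suitable parameters) is first-order,
   hence transfers from M to every model N of Th(M). *)
Lemma transfer_ucomb (M N : structure L) (rho : nat -> M) :
  elem_equiv M N -> inhabited N ->
  (forall x p, sat M (tenv x p) phi <-> usat x th rho) ->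
  exists rho' : nat -> N, forall x p, sat N (tenv x p) phi <-> usat x th rho'.
Proof.
move=> MN [d] HM; apply/(sat_ucomb_sentence (fun _ => d)).
apply: (proj1 (MN _ ucomb_sentence_closed)) => e.
by apply/sat_ucomb_sentence; exists rho.
Qed.

End Transfer.

Fixpoint pin (npred k j : nat) : formula (monadic_sig npred.+1) :=
  match j with
  | 0 => ftrue _
  | j'.+1 => fand (pin npred k j')
      (@Defs.frel (monadic_sig npred.+1) (inord (k + j') : 'I_npred.+1)
         (fun _ => tvar _ j'))
  end.

Lemma sat_pin (L : signature) (X : structure L) npred k (U : nat -> X -> Prop) j env :
  k + j <= npred ->
  (sat (unary_struct (fun i : 'I_npred.+1 => U i)) env (pin npred k j) <->
   forall i, i < j -> U (k + i) (env i)).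
Proof.
elim: j => [|j IH] hb /=; first by split.
rewrite IH ?inordK; [|lia|lia]; split.
- move=> [h1 h2] i; rewrite ltnS leq_eqVlt => /orP [/eqP ->|] //; exact: h1.
- by move=> h; split=> [i hi|]; apply: h; lia.
Qed.

Lemma fbound_pin npred k j K : j <= K -> fbound K (pin npred k j).
Proof. by elim: j => [|j IH] hj //=; split=> [|_ /=]; [apply: IH|]; lia. Qed.

Section MonadicDefinition.
Variables (L : signature) (N : structure L) (k m : nat) (th : ucomb L m).
Variables (rho p : nat -> N).
Hypothesis k_le_m : k <= m.

(* In an m-tuple (x, p_0, ..., p_(m-k-1)) the first k coordinates are the free
   variables x and the others are parameters.  In the monadic formula the
   m - k parameter coordinates are quantified first: param_first a is the
   variable standing for coordinate a. *)
Definition param_first (a : 'I_m) : nat := if a < k then m - k + a else a - k.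

Lemma param_first_env (x : 'I_k -> N) p' w :
  (forall i, i < m - k -> w i = p i) ->
  forall a : 'I_m, appv (m - k) w (tenv x p') (param_first a) = tenv x p a.
Proof.
move=> wp a; rewrite /param_first /appv; case: (ltnP a k) => ak.
- have -> : (m - k + a < m - k) = false by lia.
  have -> : m - k + a - (m - k) = a by lia.
  by rewrite (tenv_lt x p' (Ordinal ak)) (tenv_lt x p (Ordinal ak)).
- have -> : (a - k < m - k) = true by have := ltn_ord a; lia.
  by rewrite wp ?tenv_ge //; have := ltn_ord a; lia.
Qed.

Definition monadic_pred (i : nat) (y : N) : Prop :=
  if i < m then y = p (i - k) else upred th rho (i - m) y.

Definition monadic_formula : formula (monadic_sig (m + nparams th).+1) :=
  iter (m - k) (@fex _)
    (fand (pin (m + nparams th) k (m - k))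
          (ucomb_monadic (m + nparams th) param_first th 0)).

Lemma fbound_monadic_formula : fbound k monadic_formula.
Proof.
apply: fbound_iter_fex; rewrite subnK //; split; first exact: fbound_pin (leq_subr _ _).
apply: fbound_ucomb_monadic => a; rewrite /param_first.
by have := ltn_ord a; case: ifP; lia.
Qed.

(* The monadic formula defines, in the expansion of N, the set of x such that
   (x, p) satisfies th: the quantified parameter variables are pinned to p by
   the singleton predicates. *)
Lemma sat_monadic_formula (x : 'I_k -> N) p' :
  sat (unary_struct (fun i : 'I_(m + nparams th).+1 => monadic_pred i)) (tenv x p')
    monadic_formula <->
  usat (fun a : 'I_m => tenv x p a) th rho.
Proof.
have pinE w : sat (unary_struct (fun i : 'I_(m + nparams th).+1 => monadic_pred i))
    (appv (m - k) w (tenv x p')) (pin (m + nparams th) k (m - k)) <->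
    forall i, i < m - k -> w i = p i.
  rewrite sat_pin; last by lia.
  have E i : i < m - k -> monadic_pred (k + i) (appv (m - k) w (tenv x p') i) <-> w i = p i.
    move=> hi; rewrite /monadic_pred /appv hi.
    have -> : (k + i < m) = true by lia.
    by rewrite addKn.
  by split=> H i hi; [apply/E|apply/E]; auto.
have thE w : (forall i, i < m - k -> w i = p i) ->
    sat (unary_struct (fun i : 'I_(m + nparams th).+1 => monadic_pred i))
      (appv (m - k) w (tenv x p')) (ucomb_monadic (m + nparams th) param_first th 0) <->
    usat (fun a : 'I_m => tenv x p a) th rho.
  move=> wp; apply: sat_ucomb_monadic; first by rewrite addn0.
  + move=> i y hi; rewrite /monadic_pred addn0.
    have -> : (m + i < m) = false by lia.
    by rewrite addKn.
  + exact: param_first_env.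
rewrite sat_iter_fex; split=> [[w [/pinE wp /(thE w wp)]] //|H].
by exists p; split; [exact/pinE|exact/(thE p)].
Qed.

Lemma monadic_definable (Y : ('I_k -> N) -> Prop) :
  (forall x, Y x <-> usat (fun a : 'I_m => tenv x p a) th rho) ->
  exists (n : nat) (U : 'I_n -> N -> Prop), definable0 (unary_struct U) Y.
Proof.
move=> HY; exists (m + nparams th).+1, (fun i => monadic_pred i), monadic_formula.
split; first exact: fbound_monadic_formula.
by move=> x p'; rewrite HY sat_monadic_formula.
Qed.

End MonadicDefinition.

Theorem lemma4p4 (L : signature) (M : structure L) :
  infinite_set (fun _ : M => True) ->
  mut_alg_structure M ->
  ~ purely_monadic M ->
  exists k : nat, 2 <= k /\
    exists Y : ('I_k -> M) -> Prop,
      definable M Y /\ mutually_algebraic Y /\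
      infinite_set (fun x => Y x /\ ~ diagonal x).
Proof.
move=> Minf Mma Mnot_monadic.
have [c] : inhabited M.
  by apply: NNPP => noM; apply: Minf; exists nil => x _; apply: noM.
apply: NNPP => no_witness; apply: Mnot_monadic.
have offdiag_finite k : 2 <= k -> forall Y : ('I_k -> M) -> Prop,
    definable M Y -> mutually_algebraic Y -> finite_set (fun x => Y x /\ ~ diagonal x).
  move=> k2 Y Ydef Yma; apply: NNPP => Yinf; apply: no_witness.
  by exists k; split=> //; exists Y.
move=> N N_inhabited MN k Y [phi [p HY]].
pose m := maxn k (free_bound phi).
have phi_m : fbound m phi by apply: fbound_mono (fbound_free_bound phi); exact: leq_maxr.
have [th [rho Hth]] : unary_rep (fun x : 'I_m -> M => sat M (tenv x (fun _ => c)) phi).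
  by apply: (rep_definable c offdiag_finite Mma); exists phi, (fun _ => c).
have [rho' Hrho'] : exists rho' : nat -> N,
    forall x p', sat N (tenv x p') phi <-> usat x th rho'.
  apply: (transfer_ucomb phi_m MN N_inhabited (rho := rho)) => x p'.
  by rewrite (sat_tenv_params phi_m x p' (fun _ => c)).
apply: (@monadic_definable _ _ k m th rho' p (leq_maxl _ _)) => x.
rewrite HY -(Hrho' _ p); apply: sat_ext phi_m _ => i hi.
by rewrite (tenv_lt (fun a : 'I_m => tenv x p a) p (Ordinal hi)).
Qed.
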